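(* Let $f:\mathbb{R}^n\to\mathbb{R}$ and $g:\mathbb{R}^n\to(-\infty,\infty]$ satisfy the standing assumptions below, with $3\sigma>2L$, and let $\gamma$ satisfy \[ 0<\gamma<\frac{3\sigma-2L}{L^2}. \] Let $\{(y^t,z^t,x^t)\}$ be any sequence generated by the PR splitting iteration (defined below) from some $x^0\in\mathbb{R}^n$. Then the sequence $\{\mathcal{P}_\gamma(y^t,z^t,x^t)\}_{t\ge 1}$ is nonincreasing. Moreover, if the sequence $\{(y^t,z^t,x^t)\}$ has a cluster point $(y^*,z^*,x^* )$, then \[ \lim_{t\to\infty}\|x^{t+1}-x^t\| = 2\lim_{t\to\infty}\|z^{t+1}-y^{t+1}\| = 0, \] $z^*=y^*$, and $0\in\nabla f(z^* )+\partial g(z^* )$.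
   Context: Standing assumptions: $f:\mathbb{R}^n\to\mathbb{R}$ is differentiable and strongly convex with modulus at least $\sigma>0$ (i.e. $f-\frac{\sigma}{2}\|\cdot\|^2$ is convex), and $\nabla f$ is Lipschitz continuous with modulus at most $L>0$. The function $g:\mathbb{R}^n\to(-\infty,\infty]$ is proper and lower semicontinuous, and for the $\gamma>0$ used, the set $\operatorname{Argmin}_u\{\gamma g(u)+\frac12\|u-w\|^2\}$ is nonempty for every $w\in\mathbb{R}^n$. PR splitting iteration: given $x^0$ and $\gamma>0$, for $t=0,1,2,\dots$: $y^{t+1}=\operatorname{argmin}_y\{f(y)+\frac{1}{2\gamma}\|y-x^t\|^2\}$; $z^{t+1}\in\operatorname{Argmin}_z\{g(z)+\frac{1}{2\gamma}\|2y^{t+1}-x^t-z\|^2\}$ (any choice); $x^{t+1}=x^t+2(z^{t+1}-y^{t+1})$. Merit function: $\mathcal{P}_\gamma(y,z,x):=f(y)+g(z)-\frac{3}{2\gamma}\|y-z\|^2+\frac{1}{\gamma}\langle x-y,z-y\rangle$. $\partial g$ denotes the limiting (Mordukhovich) subdifferential: $v\in\partial g(x)$ iff there exist $x^t\to x$ with $g(x^t)\to g(x)$ and $v^t\to v$ such that $\liminf_{z\to x^t, z\neq x^t}\frac{g(z)-g(x^t)-\langle v^t,z-x^t\rangle}{\|z-x^t\|}\ge 0$ for each $t$. *)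

From Stdlib Require Fin.
From Stdlib Require Import Reals Lra.
Open Scope R_scope.

Definition vec (n : nat) := Fin.t n -> R.

Fixpoint fsum (n : nat) : (Fin.t n -> R) -> R :=
  match n with
  | O => fun _ => 0
  | S m => fun h => h Fin.F1 + fsum m (fun i => h (Fin.FS i))
  end.

Definition vadd {n} (u v : vec n) : vec n := fun i => u i + v i.
Definition vsub {n} (u v : vec n) : vec n := fun i => u i - v i.
Definition vscal {n} (a : R) (u : vec n) : vec n := fun i => a * u i.
Definition vzero {n} : vec n := fun _ => 0.
Definition inner {n} (u v : vec n) : R := fsum n (fun i => u i * v i).
Definition norm {n} (u : vec n) : R := sqrt (inner u u).

(* Extended reals (-oo, +oo] : [None] stands for +oo. *)
Definition ereal := option R.

Definition rlt_e (a : R) (e : ereal) : Prop :=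
  match e with None => True | Some b => a < b end.
Definition ele (e1 e2 : ereal) : Prop :=
  match e1, e2 with
  | _, None => True
  | None, Some _ => False
  | Some a, Some b => a <= b
  end.

Definition vcv {n} (u : nat -> vec n) (l : vec n) : Prop :=
  Un_cv (fun t => norm (vsub (u t) l)) 0.

Definition has_gradient {n} (f : vec n -> R) (df : vec n -> vec n) : Prop :=
  forall x eps, 0 < eps -> exists delta, 0 < delta /\
    forall h : vec n, 0 < norm h < delta ->
      Rabs (f (vadd x h) - f x - inner (df x) h) <= eps * norm h.

Definition convex_fun {n} (F : vec n -> R) : Prop :=
  forall x y lam, 0 <= lam <= 1 ->
    F (vadd (vscal lam x) (vscal (1 - lam) y)) <= lam * F x + (1 - lam) * F y.

Definition strongly_convex {n} (f : vec n -> R) (sigma : R) : Prop :=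
  convex_fun (fun x => f x - sigma / 2 * (norm x) ^ 2).

Definition lipschitz {n} (G : vec n -> vec n) (L : R) : Prop :=
  forall x y, norm (vsub (G x) (G y)) <= L * norm (vsub x y).

Definition proper {n} (g : vec n -> ereal) : Prop := exists x r, g x = Some r.

Definition lsc {n} (g : vec n -> ereal) : Prop :=
  forall x a, rlt_e a (g x) -> exists delta, 0 < delta /\
    forall y, norm (vsub y x) < delta -> rlt_e a (g y).

Definition is_min {n} (h : vec n -> ereal) (u : vec n) : Prop :=
  exists hu, h u = Some hu /\ forall v, ele (Some hu) (h v).

Definition prox_obj {n} (g : vec n -> ereal) (gamma : R) (w : vec n) : vec n -> ereal :=
  fun u => option_map (fun gu => gamma * gu + / 2 * (norm (vsub u w)) ^ 2) (g u).

Definition frechet_subgrad {n} (g : vec n -> ereal) (x v : vec n) : Prop :=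
  exists gx, g x = Some gx /\
    forall eps, 0 < eps -> exists delta, 0 < delta /\
      forall z, 0 < norm (vsub z x) < delta ->
        match g z with
        | None => True
        | Some gz => - eps * norm (vsub z x) <= gz - gx - inner v (vsub z x)
        end.

Definition limiting_subgrad {n} (g : vec n -> ereal) (x v : vec n) : Prop :=
  exists (xs vs : nat -> vec n) (gxs : nat -> R) (gx : R),
    g x = Some gx /\
    (forall t, g (xs t) = Some (gxs t)) /\
    vcv xs x /\ Un_cv gxs gx /\ vcv vs v /\
    (forall t, frechet_subgrad g (xs t) (vs t)).

Definition merit {n} (f : vec n -> R) (g : vec n -> ereal) (gamma : R)
  (y z x : vec n) : ereal :=
  option_map (fun gz => f y + gz - 3 / (2 * gamma) * (norm (vsub y z)) ^ 2
                        + / gamma * inner (vsub x y) (vsub z y)) (g z).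

Definition pr_iteration {n} (f : vec n -> R) (g : vec n -> ereal) (gamma : R)
  (y z x : nat -> vec n) : Prop :=
  forall t,
    (forall v, f (y (S t)) + / (2 * gamma) * (norm (vsub (y (S t)) (x t))) ^ 2
               <= f v + / (2 * gamma) * (norm (vsub v (x t))) ^ 2) /\
    is_min (fun w => option_map
              (fun gw => gw + / (2 * gamma) *
                 (norm (vsub (vsub (vscal 2 (y (S t))) (x t)) w)) ^ 2) (g w))
           (z (S t)) /\
    x (S t) = vadd (x t) (vscal 2 (vsub (z (S t)) (y (S t)))).

Definition cluster_point3 {n} (y z x : nat -> vec n) (ys zs xs : vec n) : Prop :=
  forall eps N, 0 < eps -> exists t, (N <= t)%nat /\
    norm (vsub (y t) ys) < eps /\ norm (vsub (z t) zs) < eps /\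
    norm (vsub (x t) xs) < eps.

(* Optimality of the y-step gives x^t = y^{t+1} + gamma df(y^{t+1}), with which the
   merit function along the iterates becomes f y + g z + <df y, z - y> + |z - y|^2/(2 gamma).
   Comparing z^{t+2} with z^{t+1} in the prox problem, and using strong convexity and the
   Lipschitz gradient, it decreases by at least kappa/2 |y^{t+2} - y^{t+1}|^2 with
   kappa = 3 sigma - 2 L - gamma L^2 > 0, and |z^{t+1} - y^{t+1}| is controlled by the
   same step.  A cluster point bounds the merit values from below, so the steps tend to
   zero and z* = y*; passing to the limit in the prox optimality of z along a subsequence
   yields -df z* as a limiting subgradient of g at z*. *)

From Stdlib Require Import Reals Lra Lia FunctionalExtensionality ClassicalEpsilon.
Open Scope R_scope.

(** * Coordinate sums and the Euclidean norm *)

Lemma fsum_ext n (h1 h2 : Fin.t n -> R) :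
  (forall i, h1 i = h2 i) -> fsum n h1 = fsum n h2.
Proof.
  induction n as [|n IH]; intros H; simpl; [reflexivity|].
  rewrite H, (IH (fun i => h1 (Fin.FS i)) (fun i => h2 (Fin.FS i))); auto.
Qed.

Lemma fsum_add n (h1 h2 : Fin.t n -> R) :
  fsum n h1 + fsum n h2 = fsum n (fun i => h1 i + h2 i).
Proof.
  induction n as [|n IH]; simpl; [lra|].
  rewrite <- (IH (fun i => h1 (Fin.FS i)) (fun i => h2 (Fin.FS i))); ring.
Qed.

Lemma fsum_scal n c (h : Fin.t n -> R) : c * fsum n h = fsum n (fun i => c * h i).
Proof.
  induction n as [|n IH]; simpl; [lra|].
  rewrite <- (IH (fun i => h (Fin.FS i))); ring.
Qed.

Lemma fsum_opp n (h : Fin.t n -> R) : - fsum n h = fsum n (fun i => - h i).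
Proof.
  replace (- fsum n h) with (-1 * fsum n h) by ring.
  rewrite fsum_scal. apply fsum_ext; intros; ring.
Qed.

Lemma fsum_sub n (h1 h2 : Fin.t n -> R) :
  fsum n h1 - fsum n h2 = fsum n (fun i => h1 i - h2 i).
Proof. unfold Rminus. rewrite fsum_opp, fsum_add. reflexivity. Qed.

Lemma fsum_ge0 n (h : Fin.t n -> R) : (forall i, 0 <= h i) -> 0 <= fsum n h.
Proof.
  induction n as [|n IH]; intros H; simpl; [lra|].
  pose proof (H Fin.F1). pose proof (IH (fun i => h (Fin.FS i)) (fun i => H _)). lra.
Qed.

Lemma fsum_eq0 n (h : Fin.t n -> R) :
  (forall i, 0 <= h i) -> fsum n h = 0 -> forall i, h i = 0.
Proof.
  induction n as [|n IH]; intros H Hsum i; [inversion i|].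
  simpl in Hsum.
  pose proof (fsum_ge0 n (fun i => h (Fin.FS i)) (fun i => H _)). pose proof (H Fin.F1).
  apply (Fin.caseS' i (fun j => h j = 0)); [lra|].
  intro j. apply (IH (fun i => h (Fin.FS i))); [intros; apply H | lra].
Qed.

Definition sqnorm {n} (u : vec n) : R := inner u u.

(* Reduce an identity or inequality between coordinate sums to a single
   coordinate, introduced as [i]. *)
Ltac fsum_normalize :=
  repeat first [ rewrite fsum_add | rewrite fsum_sub | rewrite fsum_scal
               | rewrite fsum_opp ].
Ltac coordinatewise :=
  unfold sqnorm, inner, vadd, vsub, vscal, vzero; fsum_normalize;
  apply fsum_ext; intro i; cbv beta.
Ltac coordinatewise_le :=
  match goal with |- ?a <= ?b => enough (0 <= b - a) by lra end;
  unfold sqnorm, inner, vadd, vsub, vscal, vzero; fsum_normalize;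
  apply fsum_ge0; intro i; cbv beta.

Lemma sqnorm_ge0 {n} (u : vec n) : 0 <= sqnorm u.
Proof. apply fsum_ge0; intro; nra. Qed.

Lemma norm_sqr {n} (u : vec n) : norm u ^ 2 = sqnorm u.
Proof. apply pow2_sqrt, sqnorm_ge0. Qed.

Lemma norm_ge0 {n} (u : vec n) : 0 <= norm u.
Proof. apply sqrt_pos. Qed.

Lemma sqnorm_eq0 {n} (u : vec n) : sqnorm u = 0 -> u = vzero.
Proof.
  intro H. apply functional_extensionality; intro i.
  pose proof (fsum_eq0 n (fun i => u i * u i) (fun i => Rle_0_sqr (u i)) H i).
  unfold vzero; cbv beta in *; nra.
Qed.

Lemma inner_zero_r {n} (u : vec n) : inner u vzero = 0.
Proof.
  unfold inner, vzero. induction n as [|n IH]; simpl; [reflexivity|].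
  rewrite (IH (fun i => u (Fin.FS i))); ring.
Qed.

Lemma sqnorm_scal {n} (u : vec n) a : sqnorm (vscal a u) = a ^ 2 * sqnorm u.
Proof. coordinatewise; ring. Qed.

Lemma norm_scal {n} (u : vec n) a : norm (vscal a u) = Rabs a * norm u.
Proof.
  unfold norm; fold (sqnorm (vscal a u)) (sqnorm u).
  rewrite sqnorm_scal, sqrt_mult_alt, <- sqrt_Rsqr_abs; [|nra].
  unfold Rsqr; f_equal; f_equal; ring.
Qed.

Lemma sqnorm_sub_sym {n} (u v : vec n) : sqnorm (vsub u v) = sqnorm (vsub v u).
Proof. coordinatewise; ring. Qed.

Lemma young {n} (u v : vec n) a :
  0 < a -> Rabs (2 * inner u v) <= a * sqnorm u + / a * sqnorm v.
Proof.
  intro Ha. apply Rabs_le; split; coordinatewise_le.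
  - replace (_ - _) with (/ a * ((a * u i + v i) * (a * u i + v i))) by (field; lra).
    apply Rmult_le_pos; [apply Rlt_le, Rinv_0_lt_compat, Ha | apply Rle_0_sqr].
  - replace (_ - _) with (/ a * ((a * u i - v i) * (a * u i - v i))) by (field; lra).
    apply Rmult_le_pos; [apply Rlt_le, Rinv_0_lt_compat, Ha | apply Rle_0_sqr].
Qed.

Lemma sqnorm_add_le {n} (u v : vec n) : sqnorm (vadd u v) <= 2 * (sqnorm u + sqnorm v).
Proof. coordinatewise_le. pose proof (Rle_0_sqr (u i - v i)). unfold Rsqr in *. lra. Qed.

Lemma sqnorm_sub_le {n} (u v : vec n) : sqnorm (vsub u v) <= 2 * (sqnorm u + sqnorm v).
Proof. coordinatewise_le. pose proof (Rle_0_sqr (u i + v i)). unfold Rsqr in *. lra. Qed.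

Lemma sqnorm_sub_eq0 {n} (u v : vec n) : sqnorm (vsub u v) = 0 -> u = v.
Proof.
  intro H. apply sqnorm_eq0 in H. apply functional_extensionality; intro i.
  apply (f_equal (fun w => w i)) in H. unfold vsub, vzero in H. lra.
Qed.

(** * Convergence of real and vector sequences *)

Lemma Rabs_le_inv x y : Rabs x <= y -> - y <= x <= y.
Proof. unfold Rabs; destruct (Rcase_abs x); lra. Qed.

Lemma Un_cv_const c : Un_cv (fun _ => c) c.
Proof.
  intros eps He. exists 0%nat. intros k _. unfold R_dist.
  replace (c - c) with 0 by ring. rewrite Rabs_R0. exact He.
Qed.

Lemma Un_cv_scal c u l : Un_cv u l -> Un_cv (fun k => c * u k) (c * l).
Proof. exact (CV_mult _ _ _ _ (Un_cv_const c)). Qed.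

Lemma Un_cv_dominated u v l :
  (forall k, Rabs (u k - l) <= v k) -> Un_cv v 0 -> Un_cv u l.
Proof.
  intros Hle Hv eps He. destruct (Hv eps He) as [N HN]. exists N. intros k Hk.
  specialize (HN k Hk). unfold R_dist in *. rewrite Rminus_0_r in HN.
  pose proof (Hle k). pose proof (Rle_abs (v k)). lra.
Qed.

Lemma Un_cv_subseq u l (phi : nat -> nat) :
  (forall k, (k <= phi k)%nat) -> Un_cv u l -> Un_cv (fun k => u (phi k)) l.
Proof.
  intros Hphi Hu eps He. destruct (Hu eps He) as [N HN]. exists N. intros k Hk.
  apply HN. specialize (Hphi k). lia.
Qed.

Lemma decreasing_bounded_steps_cv0 a :
  Un_decreasing a -> has_lb a -> Un_cv (fun k => a k - a (S k)) 0.
Proof.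
  intros Hdec Hlb. destruct (decreasing_cv a Hdec Hlb) as [l Hl].
  replace 0 with (l - l) by ring.
  apply CV_minus; [exact Hl | exact (Un_cv_subseq a l S (fun k => le_S _ _ (le_n k)) Hl)].
Qed.

Lemma norm_cv0 {n} (u : nat -> vec n) :
  Un_cv (fun k => sqnorm (u k)) 0 -> Un_cv (fun k => norm (u k)) 0.
Proof.
  intro H. unfold norm. rewrite <- sqrt_0.
  exact (continuity_seq sqrt _ 0 (continuity_pt_sqrt 0 (Rle_refl 0)) H).
Qed.

Lemma vcv_sqnorm {n} (u : nat -> vec n) l :
  vcv u l <-> Un_cv (fun k => sqnorm (vsub (u k) l)) 0.
Proof.
  split; intro H.
  - replace (fun k => sqnorm (vsub (u k) l))
      with (fun k => norm (vsub (u k) l) * norm (vsub (u k) l)).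
    + replace 0 with (0 * 0) by ring. exact (CV_mult _ _ _ _ H H).
    + apply functional_extensionality; intro k. rewrite <- norm_sqr. ring.
  - exact (norm_cv0 _ H).
Qed.

Lemma vcv_const {n} (l : vec n) : vcv (fun _ => l) l.
Proof.
  unfold vcv, norm.
  replace (vsub l l) with (@vzero n)
    by (apply functional_extensionality; intro; unfold vsub, vzero; ring).
  rewrite inner_zero_r, sqrt_0. apply Un_cv_const.
Qed.

Lemma vcv_sub {n} (u v : nat -> vec n) l m :
  vcv u l -> vcv v m -> vcv (fun k => vsub (u k) (v k)) (vsub l m).
Proof.
  rewrite !vcv_sqnorm; intros Hu Hv.
  apply (Un_cv_dominated _ (fun k => 2 * (sqnorm (vsub (u k) l) + sqnorm (vsub (v k) m)))).
  - intro k. rewrite Rminus_0_r, Rabs_pos_eq by apply sqnorm_ge0.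
    replace (vsub (vsub (u k) (v k)) (vsub l m)) with (vsub (vsub (u k) l) (vsub (v k) m))
      by (apply functional_extensionality; intro; unfold vsub; ring).
    apply sqnorm_sub_le.
  - replace 0 with (2 * (0 + 0)) by ring. apply Un_cv_scal, CV_plus; assumption.
Qed.

Lemma vcv_scal {n} a (u : nat -> vec n) l :
  vcv u l -> vcv (fun k => vscal a (u k)) (vscal a l).
Proof.
  intro H. apply (Un_cv_dominated _ (fun k => Rabs a * norm (vsub (u k) l))).
  - intro k. rewrite Rminus_0_r, Rabs_pos_eq by apply norm_ge0.
    replace (vsub (vscal a (u k)) (vscal a l)) with (vscal a (vsub (u k) l))
      by (apply functional_extensionality; intro; unfold vsub, vscal; ring).
    rewrite norm_scal. apply Rle_refl.
  - replace 0 with (Rabs a * 0) by ring. apply Un_cv_scal, H.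
Qed.

Lemma lipschitz_vcv {n} (G : vec n -> vec n) L u l :
  lipschitz G L -> vcv u l -> vcv (fun k => G (u k)) (G l).
Proof.
  intros HG Hu. apply (Un_cv_dominated _ (fun k => L * norm (vsub (u k) l))).
  - intro k. rewrite Rminus_0_r, Rabs_pos_eq by apply norm_ge0. apply HG.
  - replace 0 with (L * 0) by ring. apply Un_cv_scal, Hu.
Qed.

(* Young's inequality with weight [norm (vsub u l)] bounds the cross term. *)
Lemma sqnorm_dist_le {n} (u l : vec n) :
  Rabs (sqnorm u - sqnorm l) <= sqnorm (vsub u l) + norm (vsub u l) * (sqnorm l + 1).
Proof.
  set (d := vsub u l).
  assert (E : sqnorm u - sqnorm l = 2 * inner l d + sqnorm d)
    by (unfold d; coordinatewise; ring).
  rewrite E, <- (norm_sqr d). pose proof (norm_ge0 d).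
  destruct (Req_dec (norm d) 0) as [Hd | Hd].
  - assert (Hd0 : d = vzero) by (apply sqnorm_eq0; rewrite <- norm_sqr, Hd; ring).
    assert (Hi : inner l d = 0) by (rewrite Hd0; apply inner_zero_r).
    rewrite Hi, Hd. replace (2 * 0 + 0 ^ 2) with 0 by ring.
    rewrite Rabs_R0. nra.
  - pose proof (young l d (norm d) ltac:(lra)) as Hy. rewrite <- (norm_sqr d) in Hy.
    replace (/ norm d * norm d ^ 2) with (norm d) in Hy by (field; exact Hd).
    eapply Rle_trans; [apply Rabs_triang|]. rewrite (Rabs_pos_eq (norm d ^ 2)) by nra.
    nra.
Qed.

Lemma sqnorm_cv {n} (u : nat -> vec n) l :
  vcv u l -> Un_cv (fun k => sqnorm (u k)) (sqnorm l).
Proof.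
  intro H. apply (Un_cv_dominated _ _ _ (fun k => sqnorm_dist_le (u k) l)).
  replace 0 with (0 + 0 * (sqnorm l + 1)) by ring.
  apply CV_plus; [apply vcv_sqnorm, H | apply CV_mult; [exact H | apply Un_cv_const]].
Qed.

(** * Gradients, strong convexity and Lipschitz gradients *)

Lemma has_gradient_dir {n} (f : vec n -> R) df u k eps :
  has_gradient f df -> 0 < eps ->
  exists lam0, 0 < lam0 /\ forall lam, 0 < lam < lam0 ->
    Rabs (f (vadd u (vscal lam k)) - f u - lam * inner (df u) k) <= eps * lam.
Proof.
  intros Hdf He.
  destruct (Req_dec (norm k) 0) as [Hk | Hk].
  - exists 1. split; [lra|]. intros lam Hlam.
    assert (Hk0 : k = vzero) by (apply sqnorm_eq0; rewrite <- norm_sqr, Hk; ring).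
    replace (vadd u (vscal lam k)) with u
      by (apply functional_extensionality; intro; unfold vadd, vscal; rewrite Hk0;
          unfold vzero; ring).
    rewrite Hk0, inner_zero_r. replace (f u - f u - lam * 0) with 0 by ring.
    rewrite Rabs_R0. nra.
  - assert (Hr : 0 < norm k) by (pose proof (norm_ge0 k); lra).
    destruct (Hdf u (eps / norm k)) as [delta [Hd Hh]]; [apply Rdiv_lt_0_compat; lra|].
    exists (delta / norm k). split; [apply Rdiv_lt_0_compat; lra|].
    intros lam [Hl0 Hl1].
    assert (Hlk : lam * norm k < delta).
    { apply (Rmult_lt_compat_r (norm k)) in Hl1; [|lra].
      replace (delta / norm k * norm k) with delta in Hl1 by (field; lra). exact Hl1. }
    assert (Hnh : norm (vscal lam k) = lam * norm k) by (rewrite norm_scal, Rabs_pos_eq; lra).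
    assert (Hin : inner (df u) (vscal lam k) = lam * inner (df u) k) by (coordinatewise; ring).
    specialize (Hh (vscal lam k)). rewrite Hnh, Hin in Hh.
    replace (eps * lam) with (eps / norm k * (lam * norm k)) by (field; lra).
    apply Hh. split; [apply Rmult_lt_0_compat|]; lra.
Qed.

Lemma gradient_zero_at_min {n} (F : vec n -> R) dF y :
  has_gradient F dF -> (forall v, F y <= F v) -> dF y = vzero.
Proof.
  intros HF Hmin. apply sqnorm_eq0.
  destruct (Req_dec (sqnorm (dF y)) 0) as [|Hne]; [assumption | exfalso].
  set (w := dF y) in *. pose proof (sqnorm_ge0 w).
  destruct (has_gradient_dir F dF y (vscal (-1) w) (sqnorm w / 2) HF ltac:(lra))
    as [lam0 [Hl0 Hdir]].
  specialize (Hdir (lam0 / 2) ltac:(lra)).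
  specialize (Hmin (vadd y (vscal (lam0 / 2) (vscal (-1) w)))).
  assert (Hin : inner w (vscal (-1) w) = - sqnorm w) by (coordinatewise; ring).
  fold w in Hdir. rewrite Hin in Hdir. apply Rabs_le_inv in Hdir. nra.
Qed.

Lemma has_gradient_add_sqdist {n} (f : vec n -> R) df c a :
  has_gradient f df ->
  has_gradient (fun v => f v + c * sqnorm (vsub v a))
               (fun v => vadd (df v) (vscal (2 * c) (vsub v a))).
Proof.
  intros Hdf v eps He. cbv beta.
  destruct (Hdf v (eps / 2)) as [delta [Hd Hh]]; [lra|].
  set (C := Rabs c + 1). assert (HC : 0 < C) by (unfold C; pose proof (Rabs_pos c); lra).
  exists (Rmin delta (eps / (2 * C))).
  split; [apply Rmin_pos; [lra | apply Rdiv_lt_0_compat; lra]|].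
  intros h [Hh0 Hh1].
  assert (Hhd : norm h < delta) by (eapply Rlt_le_trans; [exact Hh1 | apply Rmin_l]).
  assert (HhC : C * norm h <= eps / 2).
  { assert (Hh2 : norm h < eps / (2 * C)) by (eapply Rlt_le_trans; [exact Hh1 | apply Rmin_r]).
    apply (Rmult_lt_compat_l C) in Hh2; [|exact HC].
    replace (C * (eps / (2 * C))) with (eps / 2) in Hh2 by (field; lra). lra. }
  assert (E1 : sqnorm (vsub (vadd v h) a) = sqnorm (vsub v a) + 2 * inner (vsub v a) h + sqnorm h)
    by (coordinatewise; ring).
  assert (E2 : inner (vadd (df v) (vscal (2 * c) (vsub v a))) h
               = inner (df v) h + 2 * c * inner (vsub v a) h) by (coordinatewise; ring).
  rewrite E1, E2.
  replace (_ - _ - _) with ((f (vadd v h) - f v - inner (df v) h) + c * sqnorm h) by ring.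
  eapply Rle_trans; [apply Rabs_triang|].
  specialize (Hh h (conj Hh0 Hhd)).
  rewrite Rabs_mult, <- norm_sqr, (Rabs_pos_eq (norm h ^ 2)) by nra.
  assert (Rabs c <= C) by (unfold C; lra).
  assert (Rabs c * norm h ^ 2 <= C * norm h * norm h) by (pose proof (Rabs_pos c); nra).
  nra.
Qed.

Lemma strongly_convex_chord {n} (f : vec n -> R) sigma u v lam :
  strongly_convex f sigma -> 0 <= lam <= 1 ->
  f (vadd u (vscal lam (vsub v u)))
    <= (1 - lam) * f u + lam * f v - sigma / 2 * lam * (1 - lam) * sqnorm (vsub v u).
Proof.
  intros Hsc Hlam. specialize (Hsc v u lam Hlam). cbv beta in Hsc.
  replace (vadd (vscal lam v) (vscal (1 - lam) u)) with (vadd u (vscal lam (vsub v u))) in Hsc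
    by (apply functional_extensionality; intro; unfold vadd, vscal, vsub; ring).
  rewrite !norm_sqr in Hsc.
  assert (sqnorm (vadd u (vscal lam (vsub v u)))
          = lam * sqnorm v + (1 - lam) * sqnorm u - lam * (1 - lam) * sqnorm (vsub v u))
    by (coordinatewise; ring).
  nra.
Qed.

(* Divide the chord inequality by [lam] and let [lam] tend to 0. *)
Lemma strongly_convex_gradient_ineq {n} (f : vec n -> R) df sigma u v :
  has_gradient f df -> strongly_convex f sigma ->
  f u + inner (df u) (vsub v u) + sigma / 2 * sqnorm (vsub v u) <= f v.
Proof.
  intros Hdf Hsc. apply Rle_plus_epsilon. intros eps He.
  set (k := vsub v u). set (N := sqnorm k). pose proof (sqnorm_ge0 k) as HN. fold N in HN.
  destruct (has_gradient_dir f df u k (eps / 2) Hdf ltac:(lra)) as [lam0 [Hl0 Hdir]].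
  set (lam := Rmin (lam0 / 2) (Rmin 1 (eps / (Rabs sigma * N + 1)))).
  assert (HsN : 0 <= Rabs sigma * N) by (apply Rmult_le_pos; [apply Rabs_pos | exact HN]).
  assert (Hl1 : lam <= lam0 / 2) by apply Rmin_l.
  assert (Hl2 : lam <= 1) by (eapply Rle_trans; [apply Rmin_r | apply Rmin_l]).
  assert (Hl3 : lam <= eps / (Rabs sigma * N + 1))
    by (eapply Rle_trans; [apply Rmin_r | apply Rmin_r]).
  assert (Hlam : 0 < lam)
    by (apply Rmin_pos; [lra | apply Rmin_pos; [lra | apply Rdiv_lt_0_compat; lra]]).
  assert (Hsmall : sigma / 2 * lam * lam * N <= eps / 2 * lam).
  { apply (Rmult_le_compat_r (Rabs sigma * N + 1)) in Hl3; [|lra].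
    replace (eps / (Rabs sigma * N + 1) * (Rabs sigma * N + 1)) with eps in Hl3 by (field; lra).
    assert (sigma * N <= Rabs sigma * N) by (apply Rmult_le_compat_r; [exact HN | apply Rle_abs]).
    assert (sigma * N * lam <= eps) by nra.
    nra. }
  pose proof (Hdir lam ltac:(lra)) as Hd. apply Rabs_le_inv in Hd.
  pose proof (strongly_convex_chord f sigma u v lam Hsc ltac:(lra)) as Hc. fold k N in Hc.
  apply (Rmult_le_reg_l lam); [exact Hlam|]. nra.
Qed.

Lemma gradient_strongly_monotone {n} (f : vec n -> R) df sigma a b :
  has_gradient f df -> strongly_convex f sigma ->
  sigma * sqnorm (vsub a b) <= inner (vsub (df a) (df b)) (vsub a b).
Proof.
  intros Hdf Hsc.
  pose proof (strongly_convex_gradient_ineq f df sigma a b Hdf Hsc).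
  pose proof (strongly_convex_gradient_ineq f df sigma b a Hdf Hsc).
  assert (inner (vsub (df a) (df b)) (vsub a b)
          = - inner (df a) (vsub b a) - inner (df b) (vsub a b)) by (coordinatewise; ring).
  rewrite (sqnorm_sub_sym b a) in *. lra.
Qed.

Lemma strongly_convex_bounded_below {n} (f : vec n -> R) df sigma :
  has_gradient f df -> strongly_convex f sigma -> 0 < sigma -> exists m, forall v, m <= f v.
Proof.
  intros Hdf Hsc Hs. set (d := df vzero).
  exists (f vzero - / (2 * sigma) * sqnorm d). intro v.
  pose proof (strongly_convex_gradient_ineq f df sigma vzero v Hdf Hsc) as H.
  pose proof (young d (vsub v vzero) (/ sigma) ltac:(apply Rinv_0_lt_compat, Hs)) as Hy.
  rewrite Rinv_inv in Hy. apply Rabs_le_inv in Hy. fold d in H.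
  replace (/ (2 * sigma)) with (/ sigma / 2) by (field; lra). lra.
Qed.

Lemma lipschitz_sqnorm {n} (G : vec n -> vec n) L a b :
  lipschitz G L -> sqnorm (vsub (G a) (G b)) <= L ^ 2 * sqnorm (vsub a b).
Proof.
  intro HG. rewrite <- !norm_sqr, <- Rpow_mult_distr.
  apply pow_incr. split; [apply norm_ge0 | apply HG].
Qed.

Lemma lipschitz_inner_le {n} (G : vec n -> vec n) L a b :
  lipschitz G L -> 0 < L -> inner (vsub (G a) (G b)) (vsub a b) <= L * sqnorm (vsub a b).
Proof.
  intros HG HL.
  pose proof (young (vsub (G a) (G b)) (vsub a b) (/ L) ltac:(apply Rinv_0_lt_compat, HL)) as Hy.
  rewrite Rinv_inv in Hy. apply Rabs_le_inv in Hy.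
  pose proof (lipschitz_sqnorm G L a b HG).
  assert (/ L * sqnorm (vsub (G a) (G b)) <= / L * (L ^ 2 * sqnorm (vsub a b)))
    by (apply Rmult_le_compat_l; [apply Rlt_le, Rinv_0_lt_compat|]; lra).
  replace (/ L * (L ^ 2 * sqnorm (vsub a b))) with (L * sqnorm (vsub a b)) in * by (field; lra).
  lra.
Qed.

(** * Proximal points *)

Definition prox_min {n} (g : vec n -> ereal) (c : R) (a z : vec n) (gz : R) : Prop :=
  g z = Some gz /\
  forall w gw, g w = Some gw -> gz + c * sqnorm (vsub a z) <= gw + c * sqnorm (vsub a w).

Lemma prox_frechet_subgrad {n} (g : vec n -> ereal) c a z gz :
  prox_min g c a z gz -> frechet_subgrad g z (vscal (2 * c) (vsub a z)).
Proof.
  intros [Hz Hmin]. exists gz. split; [exact Hz|].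
  intros eps He. set (C := Rabs c + 1).
  assert (HC : 0 < C) by (unfold C; pose proof (Rabs_pos c); lra).
  exists (eps / C). split; [apply Rdiv_lt_0_compat; lra|].
  intros w [Hw0 Hw1]. destruct (g w) as [gw|] eqn:Hgw; [|exact I].
  specialize (Hmin w gw Hgw).
  assert (E : c * sqnorm (vsub a w) - c * sqnorm (vsub a z)
              = - inner (vscal (2 * c) (vsub a z)) (vsub w z) + c * sqnorm (vsub w z))
    by (coordinatewise; ring).
  rewrite <- (norm_sqr (vsub w z)) in E.
  assert (Hr : C * norm (vsub w z) < eps).
  { apply (Rmult_lt_compat_l C) in Hw1; [|exact HC].
    replace (C * (eps / C)) with eps in Hw1 by (field; lra). exact Hw1. }
  assert (c * norm (vsub w z) ^ 2 <= C * norm (vsub w z) * norm (vsub w z))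
    by (pose proof (Rle_abs c); pose proof (norm_ge0 (vsub w z)); unfold C; nra).
  assert (C * norm (vsub w z) * norm (vsub w z) <= eps * norm (vsub w z))
    by (apply Rmult_le_compat_r; [apply norm_ge0 | lra]).
  lra.
Qed.

Lemma lsc_eventually_gt {n} (g : vec n -> ereal) (u : nat -> vec n) (gu : nat -> R) l a :
  lsc g -> vcv u l -> (forall k, g (u k) = Some (gu k)) -> rlt_e a (g l) ->
  exists N, forall k, (N <= k)%nat -> a < gu k.
Proof.
  intros Hg Hu Hgu Ha. destruct (Hg l a Ha) as [d [Hd Hnear]].
  destruct (Hu d Hd) as [N HN]. exists N. intros k Hk.
  specialize (HN k Hk). unfold R_dist in HN.
  rewrite Rminus_0_r, Rabs_pos_eq in HN by apply norm_ge0.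
  specialize (Hnear (u k) HN). rewrite Hgu in Hnear. exact Hnear.
Qed.

(* Lower semicontinuity bounds [g (z k)] from below; comparing [z k] with any fixed
   point in the prox problem bounds it from above. *)
Lemma prox_values_cv {n} (g : vec n -> ereal) c (a z : nat -> vec n) (gz : nat -> R) al zl :
  lsc g -> proper g -> vcv a al -> vcv z zl ->
  (forall k, prox_min g c (a k) (z k) (gz k)) ->
  exists gl, g zl = Some gl /\ Un_cv gz gl.
Proof.
  intros Hlsc [w0 [gw0 Hw0]] Ha Hz Hprox.
  assert (Hgz : forall k, g (z k) = Some (gz k)) by (intro k; apply (Hprox k)).
  assert (Hup : forall w gw, g w = Some gw -> forall eps, 0 < eps -> exists N, forall k,
             (N <= k)%nat -> gz k < gw + c * sqnorm (vsub al w) - c * sqnorm (vsub al zl) + eps).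
  { intros w gw Hw eps He.
    assert (Hcv : Un_cv (fun k => gw + c * sqnorm (vsub (a k) w) - c * sqnorm (vsub (a k) (z k)))
                        (gw + c * sqnorm (vsub al w) - c * sqnorm (vsub al zl))).
    { apply CV_minus; [apply CV_plus; [apply Un_cv_const|] |];
        apply Un_cv_scal, sqnorm_cv, vcv_sub; auto using vcv_const. }
    destruct (Hcv eps He) as [N HN]. exists N. intros k Hk.
    specialize (HN k Hk). unfold R_dist in HN. apply Rabs_def2 in HN.
    destruct (Hprox k) as [_ Hmin]. specialize (Hmin w gw Hw). lra. }
  destruct (g zl) as [gl|] eqn:Hgl.
  - exists gl. split; [reflexivity|]. intros eps He.
    destruct (lsc_eventually_gt g z gz zl (gl - eps) Hlsc Hz Hgz) as [N1 HN1];
      [rewrite Hgl; simpl; lra|].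
    destruct (Hup zl gl Hgl eps He) as [N2 HN2].
    exists (max N1 N2). intros k Hk.
    specialize (HN1 k ltac:(lia)). specialize (HN2 k ltac:(lia)).
    unfold R_dist. apply Rabs_def1; lra.
  - exfalso.
    destruct (lsc_eventually_gt g z gz zl
                (gw0 + c * sqnorm (vsub al w0) - c * sqnorm (vsub al zl) + 1) Hlsc Hz Hgz)
      as [N1 HN1]; [rewrite Hgl; exact I|].
    destruct (Hup w0 gw0 Hw0 1 Rlt_0_1) as [N2 HN2].
    specialize (HN1 (max N1 N2) ltac:(lia)). specialize (HN2 (max N1 N2) ltac:(lia)). lra.
Qed.

Lemma prox_limiting_subgrad {n} (g : vec n -> ereal) c (a z : nat -> vec n) (gz : nat -> R) al zl :
  lsc g -> proper g -> vcv a al -> vcv z zl ->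
  (forall k, prox_min g c (a k) (z k) (gz k)) ->
  limiting_subgrad g zl (vscal (2 * c) (vsub al zl)).
Proof.
  intros Hlsc Hprop Ha Hz Hprox.
  destruct (prox_values_cv g c a z gz al zl Hlsc Hprop Ha Hz Hprox) as [gl [Hgl Hcv]].
  exists z, (fun k => vscal (2 * c) (vsub (a k) (z k))), gz, gl.
  repeat split; auto.
  - intro k. apply (Hprox k).
  - apply vcv_scal, vcv_sub; assumption.
  - intro k. exact (prox_frechet_subgrad g c (a k) (z k) (gz k) (Hprox k)).
Qed.

Lemma cluster_point3_subseq {n} (y z x : nat -> vec n) ys zs xs :
  cluster_point3 y z x ys zs xs ->
  exists phi : nat -> nat, (forall k, (k <= phi k)%nat) /\
    vcv (fun k => y (S (phi k))) ys /\ vcv (fun k => z (S (phi k))) zs.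
Proof.
  intro Hcl.
  assert (Hex : forall k, exists m, (k <= m)%nat /\
            norm (vsub (y (S m)) ys) < RinvN k /\ norm (vsub (z (S m)) zs) < RinvN k).
  { intro k. destruct (Hcl (RinvN k) (S k) (cond_pos (RinvN k))) as [[|m] [Hm [Hy [Hz _]]]];
      [lia|].
    exists m. repeat split; auto. lia. }
  destruct (choice _ Hex) as [phi Hphi]. exists phi.
  repeat split; [intro k; apply Hphi | |];
    apply (Un_cv_dominated _ (fun k => RinvN k)); try exact RinvN_cv;
    intro k; rewrite Rminus_0_r, Rabs_pos_eq by apply norm_ge0; apply Rlt_le, Hphi.
Qed.

(** * The Peaceman-Rachford iteration *)

Section PRSplitting.

Variables (n : nat) (f : vec n -> R) (df : vec n -> vec n) (g : vec n -> ereal)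
  (sigma L gamma : R).
Hypotheses (Hdf : has_gradient f df) (Hsc : strongly_convex f sigma)
  (Hlip : lipschitz df L) (HL : 0 < L) (Hgamma : 0 < gamma).
Variables (y z x : nat -> vec n).
Hypothesis Hiter : pr_iteration f g gamma y z x.

Lemma x_eq t : x t = vadd (y (S t)) (vscal gamma (df (y (S t)))).
Proof.
  destruct (Hiter t) as [Hy _].
  assert (Hopt : vadd (df (y (S t))) (vscal (2 * / (2 * gamma)) (vsub (y (S t)) (x t))) = vzero).
  { apply (gradient_zero_at_min _ _ _ (has_gradient_add_sqdist f df _ (x t) Hdf)).
    intro v. cbv beta. rewrite <- !norm_sqr. apply Hy. }
  apply functional_extensionality; intro i. apply (f_equal (fun w => w i)) in Hopt.
  unfold vadd, vscal, vsub, vzero in *.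
  replace (x t i) with (x t i + gamma * (df (y (S t)) i + 2 * / (2 * gamma) * (y (S t) i - x t i)))
    by (rewrite Hopt; ring).
  field. lra.
Qed.

Lemma z_eq t :
  z (S t) = vscal (/ 2) (vadd (vadd (y (S (S t))) (y (S t)))
                              (vscal gamma (vsub (df (y (S (S t)))) (df (y (S t)))))).
Proof.
  destruct (Hiter t) as [_ [_ Hx]]. rewrite (x_eq (S t)), (x_eq t) in Hx.
  apply functional_extensionality; intro i. apply (f_equal (fun w => w i)) in Hx.
  unfold vadd, vscal, vsub in *. lra.
Qed.

(* The junk value [0] is never taken: [g (z (S t))] is finite by [z_prox]. *)
Definition gval t := match g (z t) with Some r => r | None => 0 end.

Lemma z_prox t :
  prox_min g (/ (2 * gamma)) (vsub (vscal 2 (y (S t))) (x t)) (z (S t)) (gval (S t)).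
Proof.
  destruct (Hiter t) as [_ [[hz [Hhz Hmin]] _]].
  unfold gval. destruct (g (z (S t))) as [gz|] eqn:Hgz; [|discriminate].
  split; [exact Hgz|]. intros w gw Hw.
  specialize (Hmin w). rewrite Hw, <- Hhz in Hmin. cbn [option_map ele] in Hmin.
  rewrite !norm_sqr in Hmin. exact Hmin.
Qed.

Definition merit_seq t :=
  f (y (S t)) + gval (S t) + inner (df (y (S t))) (vsub (z (S t)) (y (S t)))
  + / (2 * gamma) * sqnorm (vsub (z (S t)) (y (S t))).

Lemma merit_eq t : merit f g gamma (y (S t)) (z (S t)) (x (S t)) = Some (merit_seq t).
Proof.
  unfold merit. rewrite (proj1 (z_prox t)). cbn [option_map]. f_equal.
  destruct (Hiter t) as [_ [_ Hx]].
  assert (E : / gamma * inner (vsub (x (S t)) (y (S t))) (vsub (z (S t)) (y (S t)))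
              = inner (df (y (S t))) (vsub (z (S t)) (y (S t)))
                + 2 / gamma * sqnorm (vsub (z (S t)) (y (S t)))).
  { rewrite Hx, (x_eq t). coordinatewise. field. lra. }
  rewrite E, norm_sqr, sqnorm_sub_sym. unfold merit_seq. field. lra.
Qed.

Definition kappa := 3 * sigma - 2 * L - gamma * L ^ 2.

Lemma merit_descent t :
  merit_seq (S t) <= merit_seq t - kappa / 2 * sqnorm (vsub (y (S (S t))) (y (S t))).
Proof.
  (* [z (S t)] is a competitor in the prox problem solved by [z (S (S t))]. *)
  destruct (z_prox (S t)) as [_ Hmin].
  specialize (Hmin (z (S t)) (gval (S t)) (proj1 (z_prox t))).
  assert (Eprox : forall w,
     / (2 * gamma) * sqnorm (vsub (vsub (vscal 2 (y (S (S t)))) (x (S t))) w)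
     = / (2 * gamma) * sqnorm (vsub w (y (S (S t))))
       + inner (df (y (S (S t)))) (vsub w (y (S (S t))))
       + gamma / 2 * sqnorm (df (y (S (S t))))).
  { intro w. rewrite (x_eq (S t)). coordinatewise. field. lra. }
  assert (Eshift : inner (df (y (S (S t)))) (vsub (z (S t)) (y (S (S t))))
                   + / (2 * gamma) * sqnorm (vsub (z (S t)) (y (S (S t))))
     = inner (df (y (S t))) (vsub (z (S t)) (y (S t)))
       + / (2 * gamma) * sqnorm (vsub (z (S t)) (y (S t)))
       - inner (df (y (S (S t)))) (vsub (y (S (S t))) (y (S t)))
       + gamma / 2 * sqnorm (vsub (df (y (S (S t)))) (df (y (S t))))).
  { rewrite (z_eq t). coordinatewise. field. lra. }
  rewrite !Eprox in Hmin.
  set (Y := y (S t)) in *. set (Y' := y (S (S t))) in *.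
  pose proof (strongly_convex_gradient_ineq f df sigma Y' Y Hdf Hsc) as Hconv.
  pose proof (gradient_strongly_monotone f df sigma Y' Y Hdf Hsc) as Hmono.
  pose proof (lipschitz_inner_le df L Y' Y Hlip HL) as Hinner.
  pose proof (lipschitz_sqnorm df L Y' Y Hlip) as Hsq.
  pose proof (sqnorm_ge0 (vsub Y' Y)) as HN.
  assert (Hflip : inner (df Y') (vsub Y Y') = - inner (df Y') (vsub Y' Y))
    by (coordinatewise; ring).
  rewrite Hflip, sqnorm_sub_sym in Hconv.
  assert (gamma / 2 * sqnorm (vsub (df Y') (df Y)) <= gamma / 2 * (L ^ 2 * sqnorm (vsub Y' Y)))
    by (apply Rmult_le_compat_l; lra).
  (* [Hmono] and [Hinner] give sigma <= L, which weakens the descent constant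
     sigma - gamma L^2 obtained here to [kappa]. *)
  unfold merit_seq, kappa. fold Y Y'. lra.
Qed.

Lemma zy_le t :
  sqnorm (vsub (z (S t)) (y (S t)))
    <= (1 + gamma ^ 2 * L ^ 2) / 2 * sqnorm (vsub (y (S (S t))) (y (S t))).
Proof.
  pose proof (lipschitz_sqnorm df L (y (S (S t))) (y (S t)) Hlip).
  assert (sqnorm (vsub (z (S t)) (y (S t)))
          <= / 2 * sqnorm (vsub (y (S (S t))) (y (S t)))
             + gamma ^ 2 / 2 * sqnorm (vsub (df (y (S (S t)))) (df (y (S t))))).
  { rewrite (z_eq t). coordinatewise_le.
    pose proof (Rle_0_sqr (y (S (S t)) i - y (S t) i
                           - gamma * (df (y (S (S t))) i - df (y (S t)) i))).
    unfold Rsqr in *. nra. }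
  assert (gamma ^ 2 / 2 * sqnorm (vsub (df (y (S (S t)))) (df (y (S t))))
          <= gamma ^ 2 / 2 * (L ^ 2 * sqnorm (vsub (y (S (S t))) (y (S t)))))
    by (apply Rmult_le_compat_l; nra).
  lra.
Qed.

Hypotheses (Hkappa : 0 < kappa) (Hsigma : 0 < sigma) (Hlsc : lsc g) (Hproper : proper g).

Lemma merit_seq_decreasing : Un_decreasing merit_seq.
Proof.
  intro t. pose proof (merit_descent t).
  pose proof (sqnorm_ge0 (vsub (y (S (S t))) (y (S t)))). nra.
Qed.

Lemma merit_seq_le t k : merit_seq (k + t) <= merit_seq t.
Proof.
  induction k as [|k IH]; [apply Rle_refl|].
  eapply Rle_trans; [apply merit_seq_decreasing | exact IH].
Qed.

Lemma merit_seq_ge t :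
  f (y (S t)) + gval (S t) - gamma / 2 * sqnorm (df (y (S t))) <= merit_seq t.
Proof.
  pose proof (young (df (y (S t))) (vsub (z (S t)) (y (S t))) gamma Hgamma) as Hy.
  apply Rabs_le_inv in Hy.
  unfold merit_seq. replace (/ (2 * gamma)) with (/ gamma / 2) by (field; lra). lra.
Qed.

(* Near a cluster point [f] is bounded below by strong convexity, [g] by lower
   semicontinuity and [|df (y t)|] by continuity of [df]. *)
Lemma merit_seq_bounded_below ys zs xs :
  cluster_point3 y z x ys zs xs -> exists B, forall t, B <= merit_seq t.
Proof.
  intro Hcl.
  destruct (strongly_convex_bounded_below f df sigma Hdf Hsc Hsigma) as [m Hm].
  set (a0 := match g zs with Some r => r - 1 | None => 0 end).
  assert (Ha0 : rlt_e a0 (g zs)) by (unfold a0; destruct (g zs); simpl; [lra | exact I]).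
  destruct (Hlsc zs a0 Ha0) as [d [Hd Hnear]].
  exists (m + a0 - gamma * (L ^ 2 + sqnorm (df ys))). intro t.
  destruct (Hcl (Rmin 1 d) (S t) ltac:(apply Rmin_pos; lra)) as [[|s] [Hs [Hy [Hz _]]]];
    [lia|].
  apply Rle_trans with (merit_seq s);
    [| replace s with ((s - t) + t)%nat by lia; apply merit_seq_le].
  eapply Rle_trans; [| apply merit_seq_ge].
  assert (HgZ : a0 < gval (S s)).
  { specialize (Hnear (z (S s)) (Rlt_le_trans _ _ _ Hz (Rmin_r 1 d))).
    rewrite (proj1 (z_prox s)) in Hnear. exact Hnear. }
  assert (HY : sqnorm (vsub (y (S s)) ys) <= 1).
  { rewrite <- norm_sqr. pose proof (norm_ge0 (vsub (y (S s)) ys)).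
    pose proof (Rmin_l 1 d). nra. }
  pose proof (sqnorm_add_le (vsub (df (y (S s))) (df ys)) (df ys)) as HD.
  replace (vadd (vsub (df (y (S s))) (df ys)) (df ys)) with (df (y (S s))) in HD
    by (apply functional_extensionality; intro; unfold vadd, vsub; ring).
  pose proof (lipschitz_sqnorm df L (y (S s)) ys Hlip).
  assert (L ^ 2 * sqnorm (vsub (y (S s)) ys) <= L ^ 2) by (pose proof (pow2_ge_0 L); nra).
  assert (gamma / 2 * sqnorm (df (y (S s))) <= gamma * (L ^ 2 + sqnorm (df ys)))
    by nra.
  specialize (Hm (y (S s))). lra.
Qed.

Lemma zy_sqnorm_cv0 ys zs xs :
  cluster_point3 y z x ys zs xs ->
  Un_cv (fun t => sqnorm (vsub (z (S t)) (y (S t)))) 0.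
Proof.
  intro Hcl. destruct (merit_seq_bounded_below ys zs xs Hcl) as [B HB].
  assert (Hlb : has_lb merit_seq).
  { exists (- B). intros r [t ->]. unfold opp_seq. specialize (HB t). lra. }
  pose proof (decreasing_bounded_steps_cv0 _ merit_seq_decreasing Hlb) as Hsteps.
  apply (Un_cv_dominated _
           (fun t => (1 + gamma ^ 2 * L ^ 2) / 2 * (2 / kappa * (merit_seq t - merit_seq (S t))))).
  - intro t. rewrite Rminus_0_r, Rabs_pos_eq by apply sqnorm_ge0.
    eapply Rle_trans; [apply zy_le|]. apply Rmult_le_compat_l; [nra|].
    pose proof (merit_descent t).
    apply (Rmult_le_reg_l (kappa / 2)); [lra|].
    replace (kappa / 2 * (2 / kappa * (merit_seq t - merit_seq (S t))))
      with (merit_seq t - merit_seq (S t)) by (field; lra).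
    lra.
  - replace 0 with ((1 + gamma ^ 2 * L ^ 2) / 2 * (2 / kappa * 0)) by ring.
    apply Un_cv_scal, Un_cv_scal, Hsteps.
Qed.

Lemma cluster_point_zs_eq_ys ys zs xs : cluster_point3 y z x ys zs xs -> zs = ys.
Proof.
  intro Hcl. destruct (cluster_point3_subseq y z x ys zs xs Hcl) as [phi [Hphi [Hy Hz]]].
  apply sqnorm_sub_eq0.
  apply (UL_sequence (fun k => sqnorm (vsub (z (S (phi k))) (y (S (phi k)))))).
  - apply sqnorm_cv, vcv_sub; assumption.
  - exact (Un_cv_subseq _ _ phi Hphi (zy_sqnorm_cv0 ys zs xs Hcl)).
Qed.

(* Along a subsequence converging to the cluster point, the prox centers
   [2 y - x = y - gamma df y] converge to [ys - gamma df ys]. *)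
Lemma cluster_point_subgrad ys xs :
  cluster_point3 y z x ys ys xs -> limiting_subgrad g ys (vscal (-1) (df ys)).
Proof.
  intro Hcl. destruct (cluster_point3_subseq y z x ys ys xs Hcl) as [phi [_ [Hy Hz]]].
  assert (Ha : vcv (fun k => vsub (vscal 2 (y (S (phi k)))) (x (phi k)))
                   (vsub ys (vscal gamma (df ys)))).
  { replace (fun k => vsub (vscal 2 (y (S (phi k)))) (x (phi k)))
      with (fun k => vsub (y (S (phi k))) (vscal gamma (df (y (S (phi k)))))).
    - apply vcv_sub; [exact Hy | apply vcv_scal, (lipschitz_vcv df L); assumption].
    - apply functional_extensionality; intro k. rewrite x_eq.
      apply functional_extensionality; intro i. unfold vsub, vadd, vscal. ring. }
  replace (vscal (-1) (df ys))
    with (vscal (2 * / (2 * gamma)) (vsub (vsub ys (vscal gamma (df ys))) ys))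
    by (apply functional_extensionality; intro; unfold vscal, vsub; field; lra).
  exact (prox_limiting_subgrad g _ _ _ _ _ _ Hlsc Hproper Ha Hz (fun k => z_prox (phi k))).
Qed.

Lemma merit_nonincreasing t :
  (1 <= t)%nat ->
  ele (merit f g gamma (y (S t)) (z (S t)) (x (S t))) (merit f g gamma (y t) (z t) (x t)).
Proof.
  intro Ht. destruct t as [|t]; [lia|].
  rewrite !merit_eq. apply merit_seq_decreasing.
Qed.

Lemma cluster_point_stationary ys zs xs :
  cluster_point3 y z x ys zs xs ->
  Un_cv (fun t => norm (vsub (x (S t)) (x t))) 0 /\
  Un_cv (fun t => 2 * norm (vsub (z (S t)) (y (S t)))) 0 /\
  zs = ys /\
  exists v, limiting_subgrad g zs v /\ vadd (df zs) v = vzero.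
Proof.
  intro Hcl.
  assert (Hzy : Un_cv (fun t => 2 * norm (vsub (z (S t)) (y (S t)))) 0).
  { replace 0 with (2 * 0) by ring. apply Un_cv_scal, norm_cv0, (zy_sqnorm_cv0 ys zs xs Hcl). }
  assert (Hx : (fun t => norm (vsub (x (S t)) (x t)))
               = (fun t => 2 * norm (vsub (z (S t)) (y (S t))))).
  { apply functional_extensionality; intro t. destruct (Hiter t) as [_ [_ ->]].
    replace (vsub (vadd (x t) (vscal 2 (vsub (z (S t)) (y (S t))))) (x t))
      with (vscal 2 (vsub (z (S t)) (y (S t))))
      by (apply functional_extensionality; intro; unfold vsub, vadd, vscal; ring).
    rewrite norm_scal, Rabs_pos_eq; lra. }
  pose proof (cluster_point_zs_eq_ys ys zs xs Hcl) as ->.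
  rewrite Hx. repeat split; [exact Hzy | exact Hzy|].
  exists (vscal (-1) (df ys)). split; [exact (cluster_point_subgrad ys xs Hcl)|].
  apply functional_extensionality; intro. unfold vadd, vscal, vzero. ring.
Qed.

End PRSplitting.

Theorem theorem1 (n : nat) (f : vec n -> R) (df : vec n -> vec n)
  (g : vec n -> ereal) (sigma L gamma : R)
  (Hsigma : 0 < sigma) (HL : 0 < L)
  (Hdf : has_gradient f df) (Hsc : strongly_convex f sigma)
  (Hlip : lipschitz df L)
  (Hproper : proper g) (Hlsc : lsc g)
  (Hgam : 0 < gamma < (3 * sigma - 2 * L) / L ^ 2)
  (Hprox : forall w : vec n, exists u, is_min (prox_obj g gamma w) u)
  (H3 : 3 * sigma > 2 * L)
  (y z x : nat -> vec n) (Hiter : pr_iteration f g gamma y z x) :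
  (forall t, (1 <= t)%nat ->
     ele (merit f g gamma (y (S t)) (z (S t)) (x (S t)))
         (merit f g gamma (y t) (z t) (x t))) /\
  (forall ys zs xs : vec n, cluster_point3 y z x ys zs xs ->
     Un_cv (fun t => norm (vsub (x (S t)) (x t))) 0 /\
     Un_cv (fun t => 2 * norm (vsub (z (S t)) (y (S t)))) 0 /\
     zs = ys /\
     exists v, limiting_subgrad g zs v /\ vadd (df zs) v = vzero).
Proof.
  destruct Hgam as [Hgamma Hsmall].
  assert (Hkappa : 0 < kappa sigma L gamma).
  { apply (Rmult_lt_compat_r (L ^ 2)) in Hsmall; [|nra].
    replace ((3 * sigma - 2 * L) / L ^ 2 * L ^ 2) with (3 * sigma - 2 * L) in Hsmall
      by (field; lra).
    unfold kappa. lra. }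
  split.
  - intros t. eapply (merit_nonincreasing n f df g sigma L gamma); eauto.
  - intros ys zs xs. eapply (cluster_point_stationary n f df g sigma L gamma); eauto.
Qed.
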